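(* Let $A_n=1$ if $n=2^{k+1}-2$ for some integer $k\ge0$ and $A_n=0$ otherwise, and let $D(n)=\det\left(A_{i+j}\right)_{i,j=0}^{n-1}$ for $n\ge1$, $D(0)=1$. Let $k>0$. Then $$D(2^{k+1}+n)=-D(n)\quad\text{for }0\le n<2^k,\qquad D(2^{k+1}+n)=D(n)\quad\text{for }2^k\le n<2^{k+1}.$$ *)

From mathcomp Require Import all_boot all_order all_algebra.
Set Implicit Arguments. Unset Strict Implicit. Unset Printing Implicit Defensive.
Import GRing.Theory Num.Theory.
Local Open Scope ring_scope.

(* A_n = 1 if n = 2^(k+1) - 2 for some integer k >= 0, else 0.
   Any such k satisfies k <= n (since 2^(k+1) - 2 >= k), so the search
   over k < n+1 is exhaustive; this makes the predicate boolean. *)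
Definition isA (n : nat) : bool := [exists k : 'I_n.+1, n == (2 ^ k.+1 - 2)%N].
Definition A (n : nat) : int := if isA n then 1 else 0.

Definition D (n : nat) : int := \det (\matrix_(i < n, j < n) A (i + j)%N).

From mathcomp Require Import all_boot all_order all_algebra.
From mathcomp Require Import zify.
Local Open Scope ring_scope.
Import GRing.Theory.

(* For p = 2^k - 1 the sequence A restricted to [p, 4p] is the indicator of 2p,
   the only number of the form 2^(i+1) - 2 in that window.  Hence in the Hankel
   matrix (A_(i+j)) of size p + 1 + n, n <= p, the last row and the last column
   each contain a single 1, in position p - n.  Expanding along both removes the
   indices p - n and p + n at the cost of a sign -1; repeating this peels off the
   pairs {p - l, p + l} for l = n, ..., 1 and then p itself, leaving the leading
   minor of size p - n.  Thus D(2^k + n) = (-1)^n D(2^k - 1 - n), and applying this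
   reflection twice, at 2^(k+1) and at 2^k, gives both identities. *)

Section UnitPivots.

Variable R : comNzRingType.

Lemma det_pivot_last m (M : 'M[R]_m.+1) :
  (forall j, M ord_max j = (j == ord_max)%:R) ->
  \det M = \det (row' ord_max (col' ord_max M)).
Proof.
move=> Mlast; rewrite (expand_det_row _ ord_max) (bigD1 ord_max) //= big1 ?addr0.
  by rewrite Mlast eqxx mul1r /cofactor addnn -signr_odd odd_double mul1r.
by move=> j /negbTE j_neq; rewrite Mlast j_neq mul0r.
Qed.

Lemma lift_ord_max_lift m (q : 'I_m.+1) (j : 'I_m) :
  lift (lift ord_max q) (lift ord_max j) = lift ord_max (lift q j).
Proof.
apply: val_inj; rewrite /= /bump.
by have := ltn_ord q; have := ltn_ord j; case: (leqP q j) => /=; lia.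
Qed.

Lemma det_pivot_pair m (M : 'M[R]_m.+2) (q : 'I_m.+1) :
  (forall j, M ord_max j = (j == lift ord_max q)%:R) ->
  (forall i, M i ord_max = (i == lift ord_max q)%:R) ->
  \det M = - \det (row' q (col' q (row' ord_max (col' ord_max M)))).
Proof.
set q' := lift ord_max q => Mrow Mcol.
have q'_max : lift q' ord_max = ord_max.
  by apply: val_inj; rewrite /= /bump; have := ltn_ord q; case: leqP; case: leqP; lia.
set N := row' ord_max (col' q' M).
have Ncol i : N i ord_max = (i == q)%:R.
  by rewrite !mxE q'_max Mcol (inj_eq lift_inj).
have -> : \det M = (-1) ^+ (m.+1 + q) * \det N.
  rewrite (expand_det_row _ ord_max) (bigD1 q') //= big1 ?addr0.
    by rewrite Mrow eqxx mul1r /cofactor /= /bump leqNgt ltn_ord.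
  by move=> j /negbTE j_neq; rewrite Mrow j_neq mul0r.
have -> : \det N = (-1) ^+ (q + m) * \det (row' q (col' ord_max N)).
  rewrite (expand_det_col _ ord_max) (bigD1 q) //= big1 ?addr0.
    by rewrite Ncol eqxx mul1r.
  by move=> i /negbTE i_neq; rewrite Ncol i_neq mul0r.
have odd_sign : odd (m.+1 + q + (q + m)).
  by rewrite (_ : _ + _ = (m + q).*2.+1)%N ?odd_double // -addnn; lia.
rewrite mulrA -exprD -signr_odd odd_sign mulN1r; congr (- \det _).
by apply/matrixP => i j; rewrite !mxE lift_ord_max_lift.
Qed.

End UnitPivots.

Section HankelMinors.

Variables (R : comNzRingType) (a : nat -> R).

Definition hankel_minor m (f : nat -> nat) : R :=
  \det (\matrix_(i < m, j < m) a (f i + f j)).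

Definition hankel_det n := hankel_minor n id.

Lemma eq_hankel_minor m f g :
  {in gtn m, f =1 g} -> hankel_minor m f = hankel_minor m g.
Proof.
by move=> fg; congr (\det _); apply/matrixP => i j; rewrite !mxE !fg ?inE.
Qed.

Lemma hankel_minor_pivot_last m f :
  (forall j, (j <= m)%N -> a (f m + f j) = (j == m)%:R) ->
  hankel_minor m.+1 f = hankel_minor m f.
Proof.
move=> piv; rewrite /hankel_minor det_pivot_last => [|j].
  by congr (\det _); apply/matrixP => i j; rewrite !mxE !lift_max.
by rewrite mxE piv ?leq_ord.
Qed.

Lemma hankel_minor_pivot_pair m f q : (q <= m)%N ->
  (forall j, (j <= m.+1)%N -> a (f m.+1 + f j) = (j == q)%:R) ->
  hankel_minor m.+2 f = - hankel_minor m (f \o bump q).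
Proof.
rewrite -ltnS => q_lt piv; rewrite /hankel_minor (@det_pivot_pair _ _ _ (Ordinal q_lt)).
- by congr (- \det _); apply/matrixP => i j; rewrite !mxE !lift_max.
- by move=> j; rewrite mxE piv ?leq_ord // -val_eqE /= /bump leqNgt q_lt.
- by move=> i; rewrite mxE addnC piv ?leq_ord // -val_eqE /= /bump leqNgt q_lt.
Qed.

(* [gap b c] enumerates [0, b) followed by [b + c, oo); with b = p - n and
   c = n - l it lists [0, p - n) followed by [p - l, p + l]. *)
Definition gap b c i := if (i < b)%N then i else (i + c)%N.

Variable p : nat.
Hypothesis window : forall x, (p <= x <= 4 * p)%N -> a x = (x == p.*2)%:R.

Lemma window_pivot (x j q : nat) :
  (p <= x <= 4 * p)%N -> (x == p.*2) = (j == q) -> a x = (j == q)%:R.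
Proof. by move=> /window-> ->. Qed.

Lemma hankel_minor_gap_peel n l : (n <= p)%N -> (l < n)%N ->
  hankel_minor (p - n + l.+1.*2).+1 (gap (p - n) (n - l.+1))
  = - hankel_minor (p - n + l.*2).+1 (gap (p - n) (n - l)).
Proof.
move=> n_le l_lt; set b := (p - n)%N.
have -> : ((b + l.+1.*2).+1 = (b + l.*2).+1.+2)%N by lia.
rewrite (@hankel_minor_pivot_pair _ _ b); last 2 first.
- lia.
- move=> j j_le; rewrite /gap.
  by case: ltnP => top_b; case: ltnP => j_b; try lia;
    (apply: window_pivot; [|apply/eqP/eqP]); lia.
congr (- _); apply: eq_hankel_minor => i _; rewrite /gap /= /bump.
by case: (leqP b i) => /= i_b; case: ltnP; lia.
Qed.


Lemma hankel_minor_gap_peel_iter n l : (n <= p)%N -> (l <= n)%N ->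
  hankel_minor (p - n + l.*2).+1 (gap (p - n) (n - l))
  = (-1) ^+ l * hankel_minor (p - n).+1 (gap (p - n) n).
Proof.
move=> n_le; elim: l => [|l IH] l_le; first by rewrite subn0 double0 addn0 expr0 mul1r.
rewrite hankel_minor_gap_peel // IH; last exact: ltnW.
by rewrite exprS mulN1r mulNr.
Qed.

Lemma hankel_minor_gap_last n : (n <= p)%N ->
  hankel_minor (p - n).+1 (gap (p - n) n) = hankel_det (p - n).
Proof.
move=> n_le; rewrite hankel_minor_pivot_last => [|j j_le].
  by apply: eq_hankel_minor => i; rewrite inE /gap => ->.
rewrite /gap ltnn; case: ltnP => j_b; apply: window_pivot; try apply/eqP/eqP; lia.
Qed.

Lemma hankel_det_reflect n : (n <= p)%N ->
  hankel_det (p.+1 + n) = (-1) ^+ n * hankel_det (p - n).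
Proof.
move=> n_le; rewrite -hankel_minor_gap_last // -hankel_minor_gap_peel_iter // subnn.
rewrite /hankel_det (_ : p.+1 + n = (p - n + n.*2).+1)%N; last by lia.
by apply: eq_hankel_minor => i _; rewrite /gap addn0 if_same.
Qed.

End HankelMinors.

Lemma isAP n : reflect (exists i, n = (2 ^ i.+1 - 2)%N) (isA n).
Proof.
apply: (iffP existsP) => [[i /eqP ->]|[i ->]]; first by exists i.
have i_lt : (i < (2 ^ i.+1 - 2).+1)%N.
  by have := ltn_expl i (ltnSn 1); rewrite expnS; lia.
by exists (Ordinal i_lt).
Qed.

Lemma A_window k x : (2 ^ k - 1 <= x <= 4 * (2 ^ k - 1))%N ->
  A x = (x == (2 ^ k - 1).*2)%:R.
Proof.
move=> x_in; rewrite /A; have pos_k : (0 < 2 ^ k)%N by rewrite expn_gt0.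
have <- : (x == (2 ^ k - 1).*2) = isA x.
  apply/eqP/isAP => [->|[i x_eq]]; first by exists k; rewrite expnS -muln2; lia.
  have pos_i : (0 < 2 ^ i)%N by rewrite expn_gt0.
  have [k_lt i_lt] : (k < i.+1 /\ i.+1 < k.+2)%N.
    rewrite -(ltn_exp2l k i.+1 (ltnSn 1)) -(ltn_exp2l i.+1 k.+2 (ltnSn 1)).
    by move: x_in; rewrite x_eq !expnS; lia.
  by rewrite x_eq (_ : i = k) ?expnS; lia.
by case: eqP.
Qed.

Lemma D_reflect k n : (n < 2 ^ k)%N -> D (2 ^ k + n) = (-1) ^+ n * D (2 ^ k - 1 - n).
Proof.
move=> n_lt; have pos_k : (0 < 2 ^ k)%N by rewrite expn_gt0.
rewrite (_ : 2 ^ k + n = (2 ^ k - 1).+1 + n)%N; last by lia.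
apply: hankel_det_reflect; last by lia.
exact: A_window.
Qed.

Theorem corollary2p3 (k : nat) (hk : (0 < k)%N) :
  (forall n : nat, (n < 2 ^ k)%N -> D (2 ^ k.+1 + n) = - D n) /\
  (forall n : nat, (2 ^ k <= n < 2 ^ k.+1)%N -> D (2 ^ k.+1 + n) = D n).
Proof.
case: k hk => // j _.
have pos_j : (0 < 2 ^ j)%N by rewrite expn_gt0.
have double_j : (2 ^ j.+1 = (2 ^ j).*2)%N by rewrite expnS mul2n.
have double_j1 : (2 ^ j.+2 = (2 ^ j.+1).*2)%N by rewrite expnS mul2n.
split=> [n n_lt | n /andP [n_ge n_lt]]; rewrite D_reflect; try lia.
  rewrite (_ : 2 ^ j.+2 - 1 - n = 2 ^ j.+1 + (2 ^ j.+1 - 1 - n))%N; last by lia.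
  rewrite D_reflect; last by lia.
  rewrite (_ : 2 ^ j.+1 - 1 - (2 ^ j.+1 - 1 - n) = n)%N; last by lia.
  rewrite mulrA -exprD -signr_odd (_ : n + _ = (2 ^ j - 1).*2.+1)%N; last by lia.
  by rewrite /= odd_double mulN1r.
rewrite [in RHS](_ : n = 2 ^ j.+1 + (n - 2 ^ j.+1))%N; last by lia.
rewrite D_reflect; last by lia.
rewrite (_ : 2 ^ j.+1 - 1 - (n - 2 ^ j.+1) = 2 ^ j.+2 - 1 - n)%N; last by lia.
congr (_ * _); rewrite -signr_odd -[RHS]signr_odd.
by rewrite {1}(_ : n = n - 2 ^ j.+1 + (2 ^ j).*2)%N ?oddD ?odd_double ?addbF //; lia.
Qed.
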